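(* Let $N>1$ and $s,r\in\mathbb{N}$. The number of pairs $(a,b)\in\{1,\dots,N\}^2$ such that \[ \frac{b\,(s\,t^2+r\,t)}{s\,a^2+r\,a}\notin\mathbb{Z}\quad\text{for all integers }1\le t<a \] equals \[ \sum_{a=1}^{N}\ \sum_{J\subseteq\{1,\dots,a-1\}}(-1)^{|J|}\left\lfloor\frac{N}{\operatorname{lcm}(m_{a,t}:t\in J)}\right\rfloor, \qquad m_{a,t}=\frac{a(sa+r)}{\gcd\bigl(a(sa+r),\,t(st+r)\bigr)}. \]
   Context: $\mathbb{N}$ denotes the positive integers; $\operatorname{lcm}$ over the empty set is $1$. *)

From mathcomp Require Import all_boot all_order all_algebra.
Set Implicit Arguments. Unset Strict Implicit. Unset Printing Implicit Defensive.

Definition qsr (s r x : nat) : nat := s * x ^ 2 + r * x.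

Definition m_at (s r a t : nat) : nat :=
  (a * (s * a + r)) %/ gcdn (a * (s * a + r)) (t * (s * t + r)).

Definition good (s r a b : nat) : bool :=
  [forall t : 'I_a, (0 < val t) ==> ~~ (qsr s r a %| b * qsr s r (val t))].

From mathcomp Require Import all_boot all_order all_algebra.
Import GRing.Theory Num.Theory.

(* Since q(x) = x(sx + r), the divisibility q(a) | b q(t) says exactly that
   m_{a,t} = q(a) / gcd(q(a), q(t)) divides b.  Hence (a, b) is good iff b is
   a multiple of none of the m_{a,t}, 1 <= t < a, and inclusion-exclusion over
   the sets J of such t counts these b in {1, ..., N}: the b divisible by every
   m_{a,t} with t in J are the N / lcm_J m_{a,t} multiples of that lcm. *)

Lemma dvdn_mull_div_gcd A B b :
  0 < B -> (A %| b * B) = (A %/ gcdn A B %| b).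
Proof.
move=> B_gt0.
have lcmE : lcmn A B = (A %/ gcdn A B) * B.
  by rewrite /lcmn mulnC -muln_divA ?dvdn_gcdl // mulnC.
by rewrite -[LHS]andbT -(dvdn_mull b (dvdnn B)) -dvdn_lcm lcmE dvdn_pmul2r.
Qed.

Section InclusionExclusion.
Local Open Scope ring_scope.

Variables (R : numDomainType) (I : finType).

Lemma sum_powerset_sign (T : {set I}) :
  \sum_(J in powerset T) (-1) ^+ #|J| = (T == set0)%:R :> R.
Proof.
have [->|[x xT]] := set_0Vmem T.
  by rewrite powerset0 big_set1 cards0 expr0 eqxx.
rewrite (introF eqP) => [|T0]; last by rewrite T0 inE in xT.
(* toggling x is a sign-reversing involution on the subsets of T *)
pose toggle (J : {set I}) : {set I} := if x \in J then J :\ x else x |: J.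
have toggleK : involutive toggle.
  move=> J; rewrite /toggle; case: (boolP (x \in J)) => xJ.
    by rewrite !inE eqxx /= setD1K.
  by rewrite !inE eqxx /= setU1K.
set S := \sum_(J in _) _.
have S_opp : S = - S.
  rewrite {1}/S (reindex_inj (can_inj toggleK)) -sumrN /=.
  apply: eq_big => J; rewrite /toggle; case: ifP => xJ.
  - by rewrite !powersetE subDset (setUidPr _) ?sub1set.
  - by rewrite !powersetE subUset sub1set xT.
  - by move=> _; rewrite (cardsD1 x J) xJ exprS mulN1r opprK.
  - by move=> _; rewrite cardsU1 xJ exprS mulN1r.
have /eqP : S *+ 2 = 0 by rewrite mulr2n {2}S_opp addrN.
by rewrite mulrn_eq0 => /eqP.
Qed.

Lemma inclusion_exclusion_forall (T : {set I}) (P : pred I) :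
  [forall t in T, ~~ P t]%:R =
  \sum_(J in powerset T) (-1) ^+ #|J| * [forall t in J, P t]%:R :> R.
Proof.
have -> : [forall t in T, ~~ P t] = ([set t in T | P t] == set0).
  apply/forall_inP/eqP => [noP | TP0 t tT].
    by apply/setP => t; rewrite !inE; case: (boolP (t \in T)) => // /noP/negbTE.
  by apply/negP => Pt; have := in_set0 t; rewrite -TP0 inE tT Pt.
rewrite -sum_powerset_sign big_mkcond [RHS]big_mkcond; apply: eq_bigr => J _.
have -> : [forall t in J, P t] = (J \subset [set t | P t]).
  by apply/forall_inP/subsetP => JP t /JP; rewrite inE.
rewrite !powersetE setIdE subsetI.
by case: (J \subset T); case: (J \subset _); rewrite ?mulr1 ?mulr0.
Qed.

End InclusionExclusion.

Lemma count_multiples N d : \sum_(1 <= b < N.+1) (d %| b : nat) = N %/ d.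
Proof.
case: d => [|d].
  rewrite divn0 big_nat_cond big1 // => b /andP[/andP[b_gt0 _] _].
  by rewrite dvd0n gtn_eqF.
elim: N => [|N IHN]; first by rewrite big_geq.
by rewrite big_nat_recr //= IHN divnS // addnC.
Qed.

Lemma card_pos_pairs n (F : nat -> nat -> bool) :
  #|[set p : 'I_n.+1 * 'I_n.+1 | [&& 0 < val p.1, 0 < val p.2 & F p.1 p.2]]| =
  \sum_(1 <= a < n.+1) \sum_(1 <= b < n.+1) F a b.
Proof.
have sum_pos (G : nat -> nat) :
    \sum_(i < n.+1 | 0 < val i) G i = \sum_(1 <= i < n.+1) G i.
  rewrite -(big_mkord (fun i => 0 < i)) [LHS]big_ltn_cond //=.
  rewrite big_nat_cond [RHS]big_nat_cond.
  by apply: eq_bigl => i; rewrite andbT andb_idr // => /andP[].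
rewrite -sum_pos; under eq_bigr do rewrite -sum_pos.
rewrite pair_big_dep -sum1_card big_mkcond [RHS]big_mkcond /=.
by apply: eq_bigr => p _; rewrite inE; case: (0 < _); case: (0 < _); case: F.
Qed.

Lemma qsrE s r x : qsr s r x = x * (s * x + r).
Proof. by rewrite /qsr mulnDr mulnCA mulnn (mulnC x r). Qed.

Lemma qsr_dvdn_mulE s r a t b :
  0 < t -> 0 < r -> (qsr s r a %| b * qsr s r t) = (m_at s r a t %| b).
Proof.
move=> t_gt0 r_gt0; rewrite !qsrE dvdn_mull_div_gcd //.
by rewrite muln_gt0 t_gt0 addn_gt0 r_gt0 orbT.
Qed.

Lemma goodE s r a b : 0 < r ->
  good s r a b = [forall t in [set t : 'I_a | 0 < val t], ~~ (m_at s r a t %| b)].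
Proof.
move=> r_gt0; apply: eq_forallb => t; rewrite inE.
by case: (boolP (0 < val t)) => //= t_gt0; rewrite qsr_dvdn_mulE.
Qed.

Theorem theorem3p8 (N s r : nat) (hN : 1 < N) (hs : 0 < s) (hr : 0 < r) :
  ((#|[set p : 'I_N.+1 * 'I_N.+1 |
       [&& 0 < val p.1, 0 < val p.2 & good s r (val p.1) (val p.2)]%N]|)%:Z =
   \sum_(1 <= a < N.+1)
     \sum_(J in powerset [set t : 'I_a | (0 < val t)%N])
       (-1) ^+ #|J| * (N %/ \big[lcmn/1%N]_(t in J) m_at s r a (val t))%:Z)%R.
Proof.
rewrite card_pos_pairs -natz natr_sum; apply: eq_big_nat => a _.
under [RHS]eq_bigr => J _ do rewrite -count_multiples -natz natr_sum mulr_sumr.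
rewrite exchange_big natr_sum; apply: eq_big_nat => b _.
rewrite goodE //.
rewrite (@inclusion_exclusion_forall _ _ _ (fun t : 'I_a => m_at s r a t %| b)).
apply: eq_bigr => J _; congr (_ * (nat_of_bool _)%:R)%R.
exact/forall_inP/dvdn_biglcmP.
Qed.
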